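(* Let $A\in\mathrm{SGL}_n(\mathbb{F}_2)$ and let $\mathbf{x}_1,\ldots,\mathbf{x}_r\in\mathbb{F}_2^n$ be linearly independent, $2\le r\le n$, such that $[\mathbf{x}_i^{\top}A^{-1}\mathbf{x}_j]_{i,j=1}^r$ has rank one and trace zero, and $\mathbf{x}_i^{\top}A^{-1}\mathbf{x}_j=0$ for some $i,j$. (i) For every even $k\in\{2,\ldots,r-1\}$ there exist linearly independent $\mathbf{y}_1,\ldots,\mathbf{y}_r\in\mathbb{F}_2^n$ and a permutation matrix $Q\in GL_r(\mathbb{F}_2)$ such that $\sum_{i=1}^r\mathbf{x}_i\mathbf{x}_i^{\top}=\sum_{i=1}^r\mathbf{y}_i\mathbf{y}_i^{\top}$, $\sum_{i=1}^r\mathbf{x}_i=\sum_{i=1}^r\mathbf{y}_i$, and $[\mathbf{y}_i^{\top}A^{-1}\mathbf{y}_j]_{i,j=1}^r=Q\begin{pmatrix}J_{k\times k}&O\\O&O\end{pmatrix}Q^{\top}$. (ii) If $\sum_{i=1}^r\mathbf{x}_i\mathbf{x}_i^{\top}=\sum_{i=1}^r\mathbf{y}_i\mathbf{y}_i^{\top}$ for some $\mathbf{y}_1,\ldots,\mathbf{y}_r\in\mathbb{F}_2^n$, then $[\mathbf{y}_i^{\top}A^{-1}\mathbf{y}_j]_{i,j=1}^r$ has rank one and trace zero, and $\mathbf{y}_{i'}^{\top}A^{-1}\mathbf{y}_{j'}=0$ for some $i',j'$.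
   Context: $\mathrm{SGL}_n(\mathbb{F}_2)$ is the set of invertible symmetric $n\times n$ matrices over the binary field $\mathbb{F}_2$; $J_{k\times k}$ is the all-ones matrix. *)

From HB Require Import structures.
From mathcomp Require Import all_boot all_order all_algebra all_fingroup.
Set Implicit Arguments. Unset Strict Implicit. Unset Printing Implicit Defensive.
Import GRing.Theory.
Local Open Scope ring_scope.

Definition gram (F : fieldType) (n r : nat) (M : 'M[F]_n) (x : 'I_r -> 'cV[F]_n)
  : 'M[F]_r := \matrix_(i, j) ((x i)^T *m M *m x j) 0 0.

Definition outer_sum (F : fieldType) (n r : nat) (x : 'I_r -> 'cV[F]_n)
  : 'M[F]_n := \sum_(i < r) x i *m (x i)^T.

Definition Jblock (F : fieldType) (r k : nat) : 'M[F]_r :=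
  \matrix_(i, j) (if (i < k)%N && (j < k)%N then 1 else 0).

Definition lin_indep (F : fieldType) (n r : nat) (x : 'I_r -> 'cV[F]_n) : bool :=
  free [seq x i | i : 'I_r].

(* Let X be the matrix with rows x_i^T and G = X A^-1 X^T.  As X has full row
   rank, X^T X = Y^T Y forces Y = D X with D^T D = 1, so the Gram matrix of the
   y_i is D G D^T: rank and trace are unchanged, and since over F_2 such a D
   fixes the all-ones vector, D G D^T = J would force G = J.  This is (ii).
   For (i), a symmetric rank-one G over F_2 is 1_B 1_B^T with B = {i | G_ii = 1},
   where |B| is even (trace 0) and 0 < |B| < r (rank one, a zero entry).  Choose
   a permutation s such that S = {i | s i < k} meets B in an odd number of
   points; then c = 1_S + 1_B has c^T c = 0 and c^T 1_B = 1, so the transvection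
   Q = 1 + c c^T is orthogonal and maps 1_B to 1_S.  Replacing X by Q X keeps
   both \sum x_i x_i^T and \sum x_i and turns G into 1_S 1_S^T, the permuted
   J block. *)

From HB Require Import structures.
From mathcomp Require Import all_boot all_order all_algebra all_fingroup.
From mathcomp Require Import zify.
Set Implicit Arguments. Unset Strict Implicit. Unset Printing Implicit Defensive.
Import GRing.Theory.
Local Open Scope ring_scope.

Section FamilyMatrix.
Variable F : fieldType.

Definition family_mx n r (x : 'I_r -> 'cV[F]_n) : 'M[F]_(r, n) :=
  \matrix_(i, k) x i k 0.

Definition row_family n r (X : 'M[F]_(r, n)) : 'I_r -> 'cV[F]_n :=
  fun i => (row i X)^T.

Variables (n r : nat).
Implicit Types (x : 'I_r -> 'cV[F]_n) (X : 'M[F]_(r, n)).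

Lemma row_familyK X : family_mx (row_family X) = X.
Proof. by apply/matrixP => i k; rewrite !mxE. Qed.

Lemma gram_family_mx (M : 'M[F]_n) x :
  gram M x = family_mx x *m M *m (family_mx x)^T.
Proof.
apply/matrixP => i j; rewrite !mxE; apply: eq_bigr => l _; rewrite !mxE.
by congr (_ * _); apply: eq_bigr => a _; rewrite !mxE.
Qed.

Lemma gram_sym (M : 'M[F]_n) x : M^T = M -> (gram M x)^T = gram M x.
Proof. by move=> M_sym; rewrite gram_family_mx !trmx_mul trmxK M_sym mulmxA. Qed.

Lemma outer_sum_family_mx x : outer_sum x = (family_mx x)^T *m family_mx x.
Proof.
apply/matrixP => a b; rewrite /outer_sum summxE !mxE; apply: eq_bigr => i _.
by rewrite !mxE big_ord1 !mxE.
Qed.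

Lemma sum_family_mx x : \sum_(i < r) x i = (const_mx 1 *m family_mx x)^T.
Proof.
apply/matrixP => a b; rewrite summxE !mxE; apply: eq_bigr => i _.
by rewrite !mxE mul1r (ord1 b).
Qed.

Lemma lin_indep_row_free x : lin_indep x = row_free (family_mx x).
Proof.
have combE (k : 'I_r -> F) :
    \sum_(i < r) k i *: [tuple x i | i < r]`_i = (\row_i k i *m family_mx x)^T.
  apply/matrixP => a b; rewrite summxE !mxE; apply: eq_bigr => i _.
  by rewrite -tnth_nth tnth_mktuple !mxE (ord1 b).
rewrite /lin_indep (_ : [seq x i | i : 'I_r] = [tuple x i | i < r]) //.
apply/freeP/idP => [indep | freeX k].
- apply: inj_row_free => v vX0; apply/rowP => i; rewrite mxE.
  apply: (indep (v 0)); rewrite combE.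
  by rewrite (_ : \row_j v 0 j = v) ?vX0 ?trmx0 //; apply/rowP => j; rewrite mxE.
move/eqP; rewrite combE trmx_eq0 mulmx_free_eq0 // => /eqP/rowP k0 i.
by have := k0 i; rewrite !mxE.
Qed.

End FamilyMatrix.

Section OrthogonalCongruence.
Variable F : fieldType.

Lemma outer_eq_orthogonal m n (X Y : 'M[F]_(m, n)) :
  row_free X -> X^T *m X = Y^T *m Y ->
  exists2 D : 'M_m, D^T *m D = 1%:M & Y = D *m X.
Proof.
move=> freeX eqXY.
(* X^T X has full rank m, so X, X^T X and Y all have the same row space. *)
have rkXX : \rank (X^T *m X) = m by rewrite mxrankMfree // mxrank_tr; apply/eqP.
have sXXY : (X^T *m X <= Y)%MS by rewrite eqXY submxMl.
have /eqmxP eqXXY : (X^T *m X == Y)%MS.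
  by rewrite -(mxrank_leqif_eq sXXY).2 eqn_leq mxrankS // rkXX rank_leq_row.
have /submxP [D defY] : (Y <= X)%MS by rewrite -eqXXY submxMl.
exists D => //.
have [P XP] := row_freeP freeX.
have := congr1 (fun M => P^T *m M *m P) eqXY.
by rewrite /= defY !trmx_mul !mulmxA -!trmx_mul XP trmx1 mul1mx -!mulmxA XP !mulmx1.
Qed.

Lemma gram_outer_sum_eq n r (M : 'M[F]_n) (x y : 'I_r -> 'cV[F]_n) :
  lin_indep x -> outer_sum x = outer_sum y ->
  exists2 D : 'M_r, D^T *m D = 1%:M & gram M y = D *m gram M x *m D^T.
Proof.
rewrite lin_indep_row_free !outer_sum_family_mx => freeX /(outer_eq_orthogonal freeX).
by case=> D D_orth defY; exists D; rewrite // !gram_family_mx defY trmx_mul !mulmxA.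
Qed.

Section OrthogonalChange.
Variables (n r : nat) (Q : 'M[F]_r) (x : 'I_r -> 'cV[F]_n).
Hypothesis Q_orth : Q^T *m Q = 1%:M.
Let y := row_family (Q *m family_mx x).

Lemma lin_indep_orthogonal_change : lin_indep y = lin_indep x.
Proof.
have [_ Q_unit] := mulmx1_unit Q_orth.
by rewrite !lin_indep_row_free row_familyK /row_free eqmxMfull // row_full_unit.
Qed.

Lemma outer_sum_orthogonal_change : outer_sum y = outer_sum x.
Proof.
by rewrite !outer_sum_family_mx row_familyK trmx_mul -mulmxA (mulmxA Q^T) Q_orth mul1mx.
Qed.

Lemma gram_orthogonal_change M : gram M y = Q *m gram M x *m Q^T.
Proof. by rewrite !gram_family_mx row_familyK trmx_mul !mulmxA. Qed.

Lemma sum_orthogonal_change :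
  (const_mx 1 : 'rV[F]_r) *m Q = const_mx 1 ->
  \sum_(i < r) y i = \sum_(i < r) x i.
Proof. by move=> Q1; rewrite !sum_family_mx row_familyK mulmxA Q1. Qed.

End OrthogonalChange.

End OrthogonalCongruence.

Lemma F2_cases (a : 'F_2) : a = 0 \/ a = 1.
Proof. by case: a => [[|[|//]]] ?; [left | right]; apply: val_inj. Qed.

Lemma F2_mulrr (a : 'F_2) : a * a = a.
Proof. by case: (F2_cases a) => ->; rewrite ?mul0r ?mulr1. Qed.

Lemma F2_natr m : m%:R = (odd m)%:R :> 'F_2.
Proof. by rewrite -Fp_nat_mod // modn2. Qed.

Lemma F2_addrr m n (M : 'M['F_2]_(m, n)) : M + M = 0.
Proof. by rewrite -mulr2n -scaler_nat (F2_natr 2) scale0r. Qed.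

Lemma ones_mul_orthogonal_F2 r (D : 'M['F_2]_r) :
  D^T *m D = 1%:M -> (const_mx 1 : 'rV_r) *m D = const_mx 1.
Proof.
(* The column sums of D form the diagonal of D^T D, as a^2 = a in F_2. *)
move=> D_orth; apply/rowP => j; rewrite !mxE.
transitivity ((D^T *m D) j j); last by rewrite D_orth mxE eqxx.
by rewrite !mxE; apply: eq_bigr => i _; rewrite !mxE mul1r F2_mulrr.
Qed.

Lemma orthogonal_congr_ones_F2 r (D : 'M['F_2]_r) :
  D^T *m D = 1%:M -> D^T *m const_mx 1 *m D = const_mx 1.
Proof.
move=> D_orth.
have onesE : const_mx 1 = (const_mx 1 : 'cV_r) *m (const_mx 1 : 'rV_r) :> 'M['F_2]_r.
  by apply/matrixP => i j; rewrite !mxE big_ord1 !mxE mulr1.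
have onesT : D^T *m const_mx 1 = const_mx 1 :> 'cV_r.
  by have := congr1 trmx (ones_mul_orthogonal_F2 D_orth); rewrite trmx_mul !trmx_const.
by rewrite onesE mulmxA onesT -mulmxA ones_mul_orthogonal_F2.
Qed.

Lemma F2_zero_entryP m n (G : 'M['F_2]_(m, n)) :
  (exists i j, G i j = 0) <-> G <> const_mx 1.
Proof.
split=> [[i [j Gij]] G1 | G_neq1]; first by move: Gij; rewrite G1 mxE; apply/eqP.
case: (pickP (fun ij => G ij.1 ij.2 == 0)) => [[i j] /eqP Gij | no_zero].
  by exists i, j.
case: G_neq1; apply/matrixP => i j; rewrite mxE.
by have := no_zero (i, j); case: (F2_cases (G i j)) => ->; rewrite ?eqxx.
Qed.

Lemma gram_outer_sum_eq_F2 n r (M : 'M['F_2]_n) (x y : 'I_r -> 'cV_n) :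
  lin_indep x -> outer_sum x = outer_sum y ->
  [/\ \rank (gram M y) = \rank (gram M x), \tr (gram M y) = \tr (gram M x) &
      (exists i j, gram M x i j = 0) -> exists i j, gram M y i j = 0].
Proof.
move=> x_indep /(gram_outer_sum_eq M x_indep) [D D_orth ->].
have [_ D_unit] := mulmx1_unit D_orth.
split.
- by rewrite mxrankMfree ?row_free_unit ?unitmx_tr // eqmxMfull ?row_full_unit.
- by rewrite mxtrace_mulC mulmxA D_orth mul1mx.
rewrite !F2_zero_entryP => Gx_neq1 Gy1; apply: Gx_neq1.
rewrite -(orthogonal_congr_ones_F2 D_orth) -Gy1 !mulmxA D_orth mul1mx.
by rewrite -mulmxA D_orth mulmx1.
Qed.

Lemma F2_transvection_orthogonal r (c : 'cV['F_2]_r) :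
  c^T *m c = 0 -> (1%:M + c *m c^T)^T *m (1%:M + c *m c^T) = 1%:M.
Proof.
move=> cc0; rewrite (raddfD (@trmx _ r r)) /= trmx1 trmx_mul trmxK.
rewrite mulmxDl mul1mx mulmxDr mulmx1 -mulmxA (mulmxA c^T) cc0 mul0mx mulmx0 addr0.
by rewrite -addrA F2_addrr addr0.
Qed.

Section SetVectors.
Variable r : nat.
Implicit Types (B C S : {set 'I_r}) (G : 'M['F_2]_r).

Definition setcv B : 'cV['F_2]_r := \col_i (i \in B)%:R.

Lemma tr_setcv_mul B C : (setcv B)^T *m setcv C = (#|B :&: C|%:R)%:M.
Proof.
apply/matrixP => i j; rewrite !ord1 !mxE eqxx mulr1n -sum1_card natr_sum [RHS]big_mkcond.
by apply: eq_bigr => l _; rewrite !mxE inE -natrM mulnb; case: (_ && _).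
Qed.

Lemma setcv_outerE B i j :
  (setcv B *m (setcv B)^T) i j = ((i \in B) && (j \in B))%:R.
Proof. by rewrite !mxE big_ord1 !mxE -natrM mulnb. Qed.

Lemma mxtrace_setcv_outer B : \tr (setcv B *m (setcv B)^T) = #|B|%:R.
Proof. by rewrite mxtrace_mulC tr_setcv_mul setIid mxtrace_scalar. Qed.

Lemma perm_mx_setcv (s : 'S_r) C : perm_mx s *m setcv C = setcv (s @^-1: C).
Proof. by apply/colP => i; rewrite -row_permE !mxE inE. Qed.

Lemma Jblock_setcv k :
  Jblock _ r k =
    setcv [set i : 'I_r | (i < k)%N] *m (setcv [set i : 'I_r | (i < k)%N])^T.
Proof.
by apply/matrixP => i j; rewrite setcv_outerE !mxE !inE; case: (_ && _).
Qed.

Lemma rank1_sym_F2 G : G^T = G -> \rank G = 1%N ->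
  G = setcv [set i | G i i == 1] *m (setcv [set i | G i i == 1])^T.
Proof.
move=> G_sym rkG.
have [a [b Gab]] : exists a b : 'cV_r, forall i j, G i j = a i 0 * b j 0.
  move: (col_base G) (row_base G) (mulmx_base G); rewrite rkG => a b <-.
  by exists a, b^T => i j; rewrite !mxE big_ord1.
have Gij i j : G i j = G i i * G j j.
  have Gji : G j i = G i j by rewrite -[in LHS]G_sym mxE.
  by rewrite !Gab mulrACA [b i 0 * _]mulrC -mulrACA -!Gab Gji F2_mulrr.
apply/matrixP => i j; rewrite Gij !mxE big_ord1 !mxE !inE.
by case: (F2_cases (G i i)) => ->; case: (F2_cases (G j j)) => ->.
Qed.

Lemma setcv_orthogonal_map S B :
  ~~ odd #|S| -> ~~ odd #|B| -> odd #|S :&: B| ->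
  exists2 Q : 'M_r, Q^T *m Q = 1%:M & Q *m setcv B = setcv S.
Proof.
move=> evenS evenB oddSB; pose c := setcv S + setcv B.
have scalarD := raddfD (@scalar_mx 'F_2 1).
have cc0 : c^T *m c = 0.
  rewrite (raddfD (@trmx _ r 1)) /= mulmxDl !mulmxDr !tr_setcv_mul setIC !setIid.
  rewrite -addrA (addrA _ _ (_%:M)) F2_addrr add0r -scalarD -natrD F2_natr oddD.
  by rewrite (negbTE evenS) (negbTE evenB) raddf0.
have cB1 : c^T *m setcv B = 1%:M.
  rewrite (raddfD (@trmx _ r 1)) /= mulmxDl !tr_setcv_mul setIid -scalarD -natrD.
  by rewrite F2_natr oddD oddSB (negbTE evenB).
exists (1%:M + c *m c^T); first exact: F2_transvection_orthogonal.
by rewrite mulmxDl mul1mx -mulmxA cB1 mulmx1 addrC -addrA F2_addrr addr0.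
Qed.

End SetVectors.

Section PermutationsOfOrdinals.
Variable r : nat.
Implicit Types (B : {set 'I_r}) (s : 'S_r).

Lemma card_ord_lt c : (c <= r)%N -> #|[set j : 'I_r | (j < c)%N]| = c.
Proof.
move=> le_cr; rewrite -sum1dep_card -(big_ord_widen _ (fun=> 1%N) le_cr).
by rewrite sum1_card card_ord.
Qed.

Lemma card_perm_lt s c : (c <= r)%N -> #|[set i | (s i < c)%N]| = c.
Proof.
move=> le_cr; rewrite -[RHS](card_ord_lt le_cr).
rewrite -[RHS](card_preimset _ (@perm_inj _ s)).
by apply: eq_card => i; rewrite !inE.
Qed.

Lemma sorting_perm B : exists p : 'S_r, forall i, (i \in B) = (p i < #|B|)%N.
Proof.
pose e := enum B ++ enum (~: B).
have /tuple_permP [q e_q] : perm_eq e (ord_tuple r).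
  apply: uniq_perm => [||i]; rewrite ?enum_uniq // ?mem_cat ?mem_enum ?inE ?orbN //.
  rewrite cat_uniq !enum_uniq andbT /=; apply/hasPn => i.
  by rewrite !mem_enum inE => /negbTE ->.
exists q^-1%g => i.
have {1}-> : i = nth i e ((q^-1)%g i).
  by rewrite e_q -tnth_nth tnth_mktuple tnth_ord_tuple permKV.
rewrite nth_cat -cardE; case: ltnP => [lt_qB | le_Bq].
  by rewrite -mem_enum mem_nth // -cardE.
have : nth i (enum (~: B)) ((q^-1)%g i - #|B|) \in ~: B.
  rewrite -mem_enum mem_nth // -cardE.
  have := cardsC B; rewrite card_ord; have := ltn_ord ((q^-1)%g i); lia.
by rewrite inE => /negbTE.
Qed.

Lemma exists_perm_odd_meet B k :
  ~~ odd #|B| -> (0 < #|B|)%N -> (#|B| < r)%N ->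
  ~~ odd k -> (0 < k)%N -> (k < r)%N ->
  exists s : 'S_r, odd #|[set i | (s i < k)%N] :&: B|.
Proof.
(* With B sorted onto the first w positions, swapping positions min(k,w)-1 and
   max(k,w) makes the first k positions meet the first w in min(k,w)-1 points. *)
move=> + + + evenk k_gt0 k_ltr; have [p] := sorting_perm B.
move: #|B| => w Bp evenw w_gt0 w_ltr.
pose m := minn k w.
have m_gt0 : (0 < m)%N by rewrite leq_min k_gt0.
have lt_m1 : (m.-1 < r)%N by lia.
have lt_M : (maxn k w < r)%N by lia.
exists (p * tperm (Ordinal lt_m1) (Ordinal lt_M))%g.
have -> : [set i | ((p * tperm (Ordinal lt_m1) (Ordinal lt_M))%g i < k)%N] :&: B =
          [set i | (p i < m.-1)%N].
  apply/setP => i; rewrite !inE permM Bp.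
  case: tpermP => [-> | -> | ne1 ne2] /=; [lia | lia |].
  have ne1' : p i <> m.-1 :> nat by move=> E; apply: ne1; apply: val_inj.
  have ne2' : p i <> maxn k w :> nat by move=> E; apply: ne2; apply: val_inj.
  lia.
have : ~~ odd m by rewrite /m; case: leqP.
by rewrite card_perm_lt ?(ltnW lt_m1) // -(prednK m_gt0) /= negbK.
Qed.

End PermutationsOfOrdinals.

Lemma rank1_sym_orthogonal_Jblock_F2 r (G : 'M['F_2]_r) k :
  G^T = G -> \rank G = 1%N -> \tr G = 0 -> (exists i j, G i j = 0) ->
  ~~ odd k -> (0 < k)%N -> (k < r)%N ->
  exists2 Q : 'M_r, Q^T *m Q = 1%:M &
    exists s : 'S_r, Q *m G *m Q^T = perm_mx s *m Jblock _ r k *m (perm_mx s)^T.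
Proof.
move=> G_sym rkG trG [i [j Gij]] evenk k_gt0 k_ltr.
have := rank1_sym_F2 G_sym rkG; set B := [set i | _] => GB.
rewrite GB in rkG trG Gij *.
have evenB : ~~ odd #|B|.
  by move: trG; rewrite mxtrace_setcv_outer F2_natr; case: (odd _) => //; move/eqP.
have B_gt0 : (0 < #|B|)%N.
  case: (set_0Vmem B) => [B0 | [l lB]]; last by apply/card_gt0P; exists l.
  move: rkG; rewrite (_ : setcv B *m _ = 0) ?mxrank0 //.
  by apply/matrixP => a b; rewrite setcv_outerE B0 inE mxE.
have B_ltr : (#|B| < r)%N.
  have : (0 < #|~: B|)%N.
    apply/card_gt0P; move: Gij; rewrite setcv_outerE.
    case: (boolP (i \in B)) => iB /=; last by exists i; rewrite inE.
    by exists j; rewrite inE; case: (j \in B) Gij => // /eqP; rewrite oner_eq0.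
  have := cardsC B; rewrite card_ord; lia.
have [s oddSB] := exists_perm_odd_meet evenB B_gt0 B_ltr evenk k_gt0 k_ltr.
have evenS : ~~ odd #|[set l | (s l < k)%N]| by rewrite card_perm_lt ?(ltnW k_ltr).
have [Q Q_orth QB] := setcv_orthogonal_map evenS evenB oddSB.
exists Q => //; exists s.
rewrite mulmxA QB -mulmxA -trmx_mul QB Jblock_setcv mulmxA perm_mx_setcv.
rewrite -mulmxA -trmx_mul perm_mx_setcv; congr (setcv _ *m (setcv _)^T);
  by apply/setP => l; rewrite !inE.
Qed.

Unset Implicit Arguments.

Theorem lemma4p9 (n r : nat) (A : 'M['F_2]_n) (x : 'I_r -> 'cV['F_2]_n) :
  A^T = A -> A \in unitmx ->
  lin_indep x -> (2 <= r)%N -> (r <= n)%N ->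
  \rank (gram (invmx A) x) = 1%N -> \tr (gram (invmx A) x) = 0 ->
  (exists i j, gram (invmx A) x i j = 0) ->
  (forall k : nat, ~~ odd k -> (2 <= k)%N -> (k <= r.-1)%N ->
     exists (y : 'I_r -> 'cV['F_2]_n) (s : 'S_r),
       [/\ lin_indep y,
           outer_sum x = outer_sum y,
           \sum_(i < r) x i = \sum_(i < r) y i &
           gram (invmx A) y = perm_mx s *m Jblock _ r k *m (perm_mx s)^T])
  /\
  (forall y : 'I_r -> 'cV['F_2]_n, outer_sum x = outer_sum y ->
     [/\ \rank (gram (invmx A) y) = 1%N, \tr (gram (invmx A) y) = 0 &
         exists i j, gram (invmx A) y i j = 0]).
Proof.
move=> A_sym _ x_indep r_ge2 _ rkG trG zeroG; split=> [k evenk k_ge2 k_le | y eq_outer].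
  have G_sym : (gram (invmx A) x)^T = gram (invmx A) x.
    by apply: gram_sym; rewrite trmx_inv A_sym.
  have k_ltr : (k < r)%N by lia.
  have [Q Q_orth [s GQ]] :=
    rank1_sym_orthogonal_Jblock_F2 G_sym rkG trG zeroG evenk (ltnW k_ge2) k_ltr.
  exists (row_family (Q *m family_mx x)), s; split.
  - by rewrite lin_indep_orthogonal_change.
  - by rewrite outer_sum_orthogonal_change.
  - by rewrite sum_orthogonal_change // ones_mul_orthogonal_F2.
  - by rewrite gram_orthogonal_change.
have [-> -> zero_y] := gram_outer_sum_eq_F2 (invmx A) x_indep eq_outer.
by split=> //; apply: zero_y.
Qed.
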